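(* Let $f\colon\mathbb{R}^d\to\mathbb{R}\cup\{\infty\}$ be a lower semicontinuous convex function, let $Q\subseteq\mathbb{R}^d$ be a nonempty closed convex set contained in the domain of $f$, and assume the set $X^*$ of minimizers of $f$ over $Q$ is nonempty, with minimum value $f^*$. Suppose $f$ has $\mu$-quadratic growth for some $\mu>0$: $f(x)\ge f^*+\frac{\mu}{2}\mathrm{dist}(x,X^* )^2$ for all $x\in Q$. Let $g(x;\xi)$ be a stochastic subgradient oracle with $\mathbb{E}_{\xi\sim D}\,g(x;\xi)\in\partial f(x)$ for all $x\in Q$, and suppose there are constants $L_0,L_1\ge0$ with $$\mathbb{E}_\xi\|g(x;\xi)\|^2\le L_0^2+L_1(f(x)-f^* )\qquad\text{for all }x\in Q.$$ Let $x_0\in Q$ and consider $x_{k+1}=P_Q(x_k-\alpha_kg(x_k;\xi_k))$ with $\xi_k\sim D$ i.i.d. and $$\alpha_k=\frac{4}{\mu(k+2)+\frac{4L_1^2}{\mu(k+1)}}.$$ Then for every $T\ge0$, $$\mathbb{E}_{\xi_{0\dots T}}\left[f\left(\frac{\sum_{k=0}^T(k+1)(1-L_1\alpha_k)x_k}{\sum_{k=0}^T(k+1)(1-L_1\alpha_k)}\right)-f^*\right]\le\frac{4L_0^2(T+1)+L_1^2\,\mathrm{dist}(x_0,X^* )^2}{\mu\sum_{k=0}^T(k+1)(1-L_1\alpha_k)}.$$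
   Context: $\mathrm{dist}(x,X^* )$ is the Euclidean distance from $x$ to $X^*$. $P_Q$ is orthogonal projection onto $Q$; $\partial f(x)=\{g: f(y)\ge f(x)+g^T(y-x)\ \forall y\in\mathbb{R}^d\}$; $\mathbb{E}_{\xi_{0\dots T}}$ is expectation over the i.i.d. samples $\xi_0,\dots,\xi_T$. *)

From HB Require Import structures.
From mathcomp Require Import all_boot all_order all_algebra.
From mathcomp Require Import all_classical all_reals all_analysis.
Set Implicit Arguments. Unset Strict Implicit. Unset Printing Implicit Defensive.
Import Order.TTheory GRing.Theory Num.Theory.
Import numFieldNormedType.Exports.
Local Open Scope classical_set_scope.
Local Open Scope ring_scope.

Section Defs.
Variables (R : realType) (d : nat).

Definition dotv (u v : 'rV[R]_d) : R := \sum_(i < d) u 0 i * v 0 i.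
Definition enorm (u : 'rV[R]_d) : R := Num.sqrt (dotv u u).

Definition setdist (x : 'rV[R]_d) (A : set 'rV[R]_d) : R :=
  inf [set enorm (x - y) | y in A].

Definition convex_setv (Q : set 'rV[R]_d) : Prop :=
  forall (x y : 'rV[R]_d) (t : R), Q x -> Q y -> 0 <= t <= 1 -> Q (t *: x + (1 - t) *: y).

Definition convex_efun (f : 'rV[R]_d -> \bar R) : Prop :=
  forall (x y : 'rV[R]_d) (t : R), 0 <= t <= 1 ->
    (f (t *: x + (1 - t) *: y)%R <= t%:E * f x + (1 - t)%R%:E * f y)%E.

Definition is_proj (Q : set 'rV[R]_d) (x p : 'rV[R]_d) : Prop :=
  Q p /\ forall y, Q y -> enorm (x - p) <= enorm (x - y).

Definition is_subgrad (f : 'rV[R]_d -> \bar R) (x g : 'rV[R]_d) : Prop :=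
  forall y, (f x + (dotv g (y - x)%R)%:E <= f y)%E.

Definition stepsize (mu L1 : R) (k : nat) : R :=
  4 / (mu * (k.+2)%:R + 4 * L1 ^+ 2 / (mu * (k.+1)%:R)).

Definition sg_weight (mu L1 : R) (k : nat) : R :=
  (k.+1)%:R * (1 - L1 * stepsize mu L1 k).

Section Iterates.
Variables (Xi : Type) (P : 'rV[R]_d -> 'rV[R]_d)
          (g : 'rV[R]_d -> Xi -> 'rV[R]_d) (mu L1 : R).

Fixpoint sg_run (k : nat) (x : 'rV[R]_d) (s : seq Xi) : 'rV[R]_d :=
  match s with
  | [::] => x
  | xi :: s' => sg_run k.+1 (P (x - stepsize mu L1 k *: g x xi)) s'
  end.

(* x_k as a function of the sample sequence s = [:: xi_0; xi_1; ...] *)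
Definition sg_iter (x0 : 'rV[R]_d) (s : seq Xi) (k : nat) : 'rV[R]_d :=
  sg_run 0 x0 (take k s).

Definition sg_avg (x0 : 'rV[R]_d) (T : nat) (s : seq Xi) : 'rV[R]_d :=
  (\sum_(k < T.+1) sg_weight mu L1 k)^-1 *:
    \sum_(k < T.+1) sg_weight mu L1 k *: sg_iter x0 s k.
End Iterates.

End Defs.

(* Expectation over n i.i.d. samples xi_0, ..., xi_{n-1} ~ D of a function of
   the sample list, written as the iterated integral (xi_0 outermost). *)
Fixpoint iterE {dk} {Xi : measurableType dk} {R : realType}
  (D : probability Xi R) (n : nat) (F : seq Xi -> \bar R) : \bar R :=
  match n with
  | 0 => F [::]
  | n'.+1 => (\int[D]_xi iterE D n' (fun s => F (xi :: s)))%E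
  end.

From HB Require Import structures.
From mathcomp Require Import all_boot all_order all_algebra.
From mathcomp Require Import all_classical all_reals all_analysis.
From mathcomp Require Import ring lra.
Set Implicit Arguments. Unset Strict Implicit. Unset Printing Implicit Defensive.
Import Order.TTheory GRing.Theory Num.Theory.
Import numFieldNormedType.Exports.
Local Open Scope classical_set_scope.
Local Open Scope ring_scope.

(* With c_k := lyap_coef k = mu k (k+1) / 4 + L1^2 / mu, the step size is
   exactly the one for which c_(k+1) alpha_k = k+1, while c_(k+1) = c_k +
   (k+1) mu / 2.  Expanding the projected step (projection onto Q does not
   increase distances to X_star) and taking the expectation over xi_k gives
     c_(k+1) E dist(x_(k+1), X_star)^2 + sg_weight k (f x_k - fstar)
       <= c_k dist(x_k, X_star)^2 + (k+1) alpha_k L0^2,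
   the excess (k+1) (f x_k - fstar) being absorbed by quadratic growth.
   Telescoping through the iterated expectation, using (k+1) alpha_k <= 4 / mu,
   and Jensen's inequality for the weighted average give the bound. *)

(* No measurability is needed: both parts of the integral are suprema over
   simple functions below f^+ (resp. f^-), and these sets are monotone in f. *)
Lemma le_integral_pointwise (dk : measure_display) (T : measurableType dk)
    (R : realType) (mu : {measure set T -> \bar R}) (A : set T) (f g : T -> \bar R) :
  (forall x, A x -> (f x <= g x)%E) ->
  (\int[mu]_(x in A) f x <= \int[mu]_(x in A) g x)%E.
Proof.
move=> fg; have fgA x : (f \_ A x <= g \_ A x)%E.
  by rewrite /patch; case: ifPn => // /set_mem; exact: fg.
rewrite /integral; apply: leeB.
  apply: ereal_sup_le => _ [h /= hf <-]; exists h => //= x.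
  by apply: le_trans (hf x) _; rewrite !funeposE le_max2.
apply: ereal_sup_le => _ [h /= hf <-]; exists h => //= x.
by apply: le_trans (hf x) _; rewrite !funenegE le_max2 // leeN2.
Qed.

Lemma le_iterE (dk : measure_display) (Xi : measurableType dk) (R : realType)
    (D : probability Xi R) n (F G : seq Xi -> \bar R) :
  (forall s, size s = n -> (F s <= G s)%E) -> (iterE D n F <= iterE D n G)%E.
Proof.
elim: n F G => [|n IH] F G FG /=; first exact: FG.
by apply: le_integral_pointwise => xi _; apply: IH => s sn; apply: FG; rewrite /= sn.
Qed.

Section InnerProduct.
Variables (R : realType) (d : nat).
Implicit Types (u v w : 'rV[R]_d).

Lemma dotvC u v : dotv u v = dotv v u.
Proof. by apply: eq_bigr => i _; rewrite mulrC. Qed.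

Lemma dotvDl u v w : dotv (u + v) w = dotv u w + dotv v w.
Proof. by rewrite /dotv -big_split; apply: eq_bigr => i _; rewrite mxE mulrDl. Qed.

Lemma dotvZl a u w : dotv (a *: u) w = a * dotv u w.
Proof. by rewrite /dotv mulr_sumr; apply: eq_bigr => i _; rewrite mxE mulrA. Qed.

Lemma dotvNl u w : dotv (- u) w = - dotv u w.
Proof. by rewrite -scaleN1r dotvZl mulN1r. Qed.

Lemma dotvDr u v w : dotv w (u + v) = dotv w u + dotv w v.
Proof. by rewrite dotvC dotvDl !(dotvC w). Qed.

Lemma dotvZr a u w : dotv w (a *: u) = a * dotv w u.
Proof. by rewrite dotvC dotvZl dotvC. Qed.

Lemma dotvNr u w : dotv w (- u) = - dotv w u.
Proof. by rewrite dotvC dotvNl dotvC. Qed.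

Lemma dotv_ge0 u : 0 <= dotv u u.
Proof. by apply: sumr_ge0 => i _; rewrite -expr2 sqr_ge0. Qed.

Lemma enorm_ge0 u : 0 <= enorm u.
Proof. exact: sqrtr_ge0. Qed.

Lemma enorm_sqr u : enorm u ^+ 2 = dotv u u.
Proof. by rewrite /enorm sqr_sqrtr // dotv_ge0. Qed.

Lemma ler_enorm u v : (enorm u <= enorm v) = (dotv u u <= dotv v v).
Proof. by rewrite /enorm ler_sqrt // dotv_ge0. Qed.

Lemma dotv_sqrBZ u v a :
  dotv (u - a *: v) (u - a *: v) = dotv u u - 2 * a * dotv u v + a ^+ 2 * dotv v v.
Proof.
rewrite !(dotvDl, dotvDr, dotvNl, dotvNr, dotvZl, dotvZr) (dotvC v u); ring.
Qed.

Lemma dotv_EFin u v : (dotv u v)%:E = (\sum_(i < d) (u 0 i)%:E * (v 0 i)%:E)%E.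
Proof. by rewrite /dotv -sumEFin; apply: eq_bigr => i _; rewrite EFinM. Qed.

End InnerProduct.

Section Projection.
Variables (R : realType) (d : nat) (Q : set 'rV[R]_d).
Hypothesis convQ : convex_setv Q.

(* Moving from p towards y by t changes |z - .|^2 by -2 t a + t^2 b, which
   is negative for small t > 0 unless a <= 0. *)
Lemma is_proj_obtuse z p y : is_proj Q z p -> Q y -> dotv (z - p) (y - p) <= 0.
Proof.
move=> [Qp pmin] Qy.
set a := dotv (z - p) (y - p); set b := dotv (y - p) (y - p).
have b0 : 0 <= b by apply: dotv_ge0.
have near_p t : 0 < t <= 1 -> 2 * a <= t * b.
  move=> /andP[t0 t1]; have t01 : 0 <= t <= 1 by rewrite t1 ltW.
  have := pmin _ (convQ Qy Qp t01); rewrite ler_enorm.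
  have -> : z - (t *: y + (1 - t) *: p) = (z - p) - t *: (y - p).
    by apply/rowP => i; rewrite !mxE; ring.
  rewrite dotv_sqrBZ -/a -/b => h.
  by rewrite -(ler_pM2l t0); lra.
rewrite leNgt; apply/negP => a0.
have ab0 : 0 < a + b by lra.
have t01 : 0 < a / (a + b) <= 1 by rewrite divr_gt0 // ler_pdivrMr //; lra.
have := near_p _ t01; rewrite mulrAC ler_pdivlMr // => h.
have : a * b <= a * (a + b) by rewrite ler_pM2l //; lra.
nra.
Qed.

Lemma is_proj_dist_le z p y : is_proj Q z p -> Q y ->
  dotv (p - y) (p - y) <= dotv (z - y) (z - y).
Proof.
move=> zp Qy; have := is_proj_obtuse zp Qy.
have -> : z - y = (z - p) - (-1) *: (p - y) by apply/rowP => i; rewrite !mxE; ring.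
have -> : p - y = - (y - p) by rewrite opprB.
rewrite dotv_sqrBZ !(dotvNl, dotvNr) opprK.
have := dotv_ge0 (z - p); lra.
Qed.

End Projection.

Section Distance.
Variables (R : realType) (d : nat).
Implicit Types (x y : 'rV[R]_d) (A : set 'rV[R]_d).

Lemma setdist_ge0 x A : A !=set0 -> 0 <= setdist x A.
Proof.
move=> [y Ay]; apply: lb_le_inf; first by exists (enorm (x - y)), y.
by move=> _ [z _ <-]; apply: enorm_ge0.
Qed.

Lemma setdist_le x A y : A y -> setdist x A <= enorm (x - y).
Proof.
move=> Ay; apply: ge_inf; last by exists y.
by exists 0 => _ [z _ <-]; apply: enorm_ge0.
Qed.

Lemma setdist_sqr_le x A y : A y -> setdist x A ^+ 2 <= dotv (x - y) (x - y).
Proof.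
move=> Ay; rewrite -enorm_sqr lerXn2r ?nnegrE ?enorm_ge0 ?setdist_le //.
by apply: setdist_ge0; exists y.
Qed.

Lemma setdist_sqr_approx x A e : A !=set0 -> 0 < e ->
  exists2 y, A y & dotv (x - y) (x - y) < setdist x A ^+ 2 + e.
Proof.
move=> A0 e0; set r := setdist x A.
have r0 : 0 <= r := setdist_ge0 x A0.
have re0 : 0 <= r ^+ 2 + e by rewrite addr_ge0 ?sqr_ge0 ?ltW.
have gap : 0 < Num.sqrt (r ^+ 2 + e) - r.
  have r2 := sqr_ge0 r; rewrite subr_gt0 -[X in X < _]ger0_norm // -sqrtr_sqr ltr_sqrt; lra.
have [_ [y Ay <-] lt_y] : exists2 s, [set enorm (x - y) | y in A] s &
    s < r + (Num.sqrt (r ^+ 2 + e) - r).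
  apply: (inf_adherent gap); split; first by case: A0 => y Ay; exists (enorm (x - y)), y.
  by exists 0 => _ [z _ <-]; apply: enorm_ge0.
exists y => //; rewrite -enorm_sqr -(sqr_sqrtr re0).
by rewrite ltrXn2r ?sqrtr_ge0 ?enorm_ge0 //; lra.
Qed.

Lemma setdist_proj_le (Q : set 'rV[R]_d) A z p y : convex_setv Q ->
  A `<=` Q -> is_proj Q z p -> A y -> setdist p A ^+ 2 <= dotv (z - y) (z - y).
Proof.
move=> convQ AQ zp Ay; apply: le_trans (setdist_sqr_le p Ay) _.
by apply: (is_proj_dist_le convQ zp); apply: AQ.
Qed.

End Distance.

Lemma sum_ord_gt0 (R : numDomainType) n (w : nat -> R) :
  (forall j, 0 < w j) -> 0 < \sum_(j < n.+1) w j.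
Proof.
move=> w0; rewrite big_ord_recr /= ltr_wpDl //.
by apply: sumr_ge0 => j _; apply: ltW.
Qed.

Section Jensen.
Variables (R : realType) (d : nat) (f : 'rV[R]_d -> \bar R).
Hypothesis convf : convex_efun f.

Lemma convex_efun_jensen n (w : nat -> R) (z : nat -> 'rV[R]_d) (h : nat -> R) :
  (forall j, 0 < w j) -> (forall j, f (z j) = (h j)%:E) ->
  (f ((\sum_(j < n.+1) w j)^-1 *: \sum_(j < n.+1) w j *: z j) <=
   ((\sum_(j < n.+1) w j)^-1 * \sum_(j < n.+1) w j * h j)%:E)%E.
Proof.
move=> w0 fz; elim: n => [|n IH].
  rewrite !big_ord1 scalerA mulVf ?gt_eqF // scale1r mulrA mulVf ?gt_eqF //.
  by rewrite mul1r fz.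
rewrite (big_ord_recr n.+1) (big_ord_recr n.+1 (fun j => w j *: z j))
  (big_ord_recr n.+1 (fun j => w j * h j)) /=.
move: IH (sum_ord_gt0 n w0).
set S := \sum_(i < n.+1) w i; set V := \sum_(i < n.+1) w i *: z i.
set H := \sum_(i < n.+1) w i * h i => IH S0.
have Sw : 0 < S + w n.+1 by rewrite addr_gt0.
have Sw0 : S + w n.+1 != 0 by rewrite gt_eqF.
set t := S / (S + w n.+1).
have t01 : 0 <= t <= 1.
  by rewrite /t divr_ge0 ?(ltW S0) ?(ltW Sw) //= ler_pdivrMr // mul1r lerDl ltW.
have -> : (S + w n.+1)^-1 *: (V + w n.+1 *: z n.+1) =
          t *: (S^-1 *: V) + (1 - t) *: z n.+1.
  by rewrite scalerDr !scalerA; congr (_ *: _ + _ *: _); rewrite /t; field;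
     rewrite Sw0 ?gt_eqF.
apply: le_trans (convf _ _ t01) _.
apply: le_trans (leeD (lee_wpmul2l _ IH) (lexx _)) _.
  by rewrite lee_fin; case/andP: t01.
rewrite fz -!EFinM -EFinD lee_fin [X in X <= _](_ : _ =
  (S + w n.+1)^-1 * (H + w n.+1 * h n.+1)) //.
by rewrite /t; field; rewrite Sw0 gt_eqF.
Qed.

End Jensen.

Section StepSize.
Variables (R : realType) (mu L1 : R).
Hypotheses (mu_gt0 : 0 < mu) (L1_ge0 : 0 <= L1).
Local Notation alpha := (stepsize mu L1).

Definition lyap_coef k : R := mu * k.+1%:R * k%:R / 4 + L1 ^+ 2 / mu.

Definition step_sum k n : R := \sum_(j < n) (k + j).+1%:R * alpha (k + j).

Let denom k := mu * k.+2%:R + 4 * L1 ^+ 2 / (mu * k.+1%:R).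

Let denom_gt0 k : 0 < denom k.
Proof.
by rewrite /denom ltr_wpDr ?mulr_gt0 // divr_ge0 ?mulr_ge0 ?sqr_ge0 ?(ltW mu_gt0).
Qed.

Lemma stepsize_gt0 k : 0 < alpha k.
Proof. by rewrite /stepsize divr_gt0 //; apply: denom_gt0. Qed.

Lemma lyap_coef0 : lyap_coef 0 = L1 ^+ 2 / mu.
Proof. by rewrite /lyap_coef mulr0 mul0r add0r. Qed.

Lemma lyap_coef_ge0 k : 0 <= lyap_coef k.
Proof. by rewrite addr_ge0 // divr_ge0 ?mulr_ge0 ?sqr_ge0 ?(ltW mu_gt0). Qed.

Lemma lyap_coefS_gt0 k : 0 < lyap_coef k.+1.
Proof. by rewrite ltr_pwDl ?divr_ge0 ?sqr_ge0 ?(ltW mu_gt0) // divr_gt0 ?mulr_gt0. Qed.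

Lemma lyap_coefS k : lyap_coef k.+1 = lyap_coef k + k.+1%:R * mu / 2.
Proof. by rewrite /lyap_coef -[k.+2%:R]natr1 -[k.+1%:R]natr1; field; rewrite (gt_eqF mu_gt0). Qed.

Lemma lyap_coefS_stepsize k : lyap_coef k.+1 * alpha k = k.+1%:R.
Proof.
have -> : lyap_coef k.+1 = k.+1%:R / 4 * denom k.
  rewrite /lyap_coef /denom /= -[k.+2%:R]natr1 -[k.+1%:R]natr1; field.
  by rewrite natr1 pnatr_eq0 (gt_eqF mu_gt0).
by rewrite /stepsize -/(denom k); field; rewrite gt_eqF.
Qed.

Lemma stepsize_le k : k.+1%:R * alpha k <= 4 / mu.
Proof.
have K0 : 0 < k.+1%:R :> R by [].
have -> : 4 / mu = k.+1%:R * (4 / (mu * k.+1%:R)).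
  by rewrite -[k.+1%:R]natr1; field; rewrite natr1 pnatr_eq0 (gt_eqF mu_gt0).
rewrite ler_pM2l // ler_pM2l // lef_pV2 ?posrE ?mulr_gt0 //; last exact: denom_gt0.
rewrite /denom -[k.+2%:R]natr1 mulrDr mulr1 -addrA lerDl.
by rewrite addr_ge0 ?(ltW mu_gt0) // divr_ge0 ?mulr_ge0 ?sqr_ge0 ?(ltW mu_gt0).
Qed.

(* With a := mu (k+1): denom k - 4 L1 = (a - 2 L1)^2 / a + mu > 0. *)
Lemma sg_weight_gt0 k : 0 < sg_weight mu L1 k.
Proof.
have gap : 4 * L1 < denom k.
  have a0 : 0 < mu * k.+1%:R by rewrite mulr_gt0.
  have -> : denom k = (mu * k.+1%:R - 2 * L1) ^+ 2 / (mu * k.+1%:R) + mu + 4 * L1.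
    rewrite /denom /= -[k.+2%:R]natr1; move: (k.+1%:R) (ltr0Sn R k) => K K0.
    by field; rewrite (gt_eqF K0) (gt_eqF mu_gt0).
  by rewrite ltr_pwDl // ltr_wpDl // divr_ge0 ?sqr_ge0 ?(ltW a0).
rewrite /sg_weight pmulr_rgt0 // subr_gt0 /stepsize mulrA ltr_pdivrMr; last exact: denom_gt0.
by rewrite mul1r mulrC.
Qed.

Lemma step_sumS k n : step_sum k n.+1 = k.+1%:R * alpha k + step_sum k.+1 n.
Proof.
rewrite /step_sum big_ord_recl addn0; congr (_ + _); apply: eq_bigr => j _.
by rewrite lift0 addnS addSn.
Qed.

Lemma lyap_coef_step_sum0_le n L0 D2 :
  lyap_coef 0 * D2 + L0 ^+ 2 * step_sum 0 n <= (4 * L0 ^+ 2 * n%:R + L1 ^+ 2 * D2) / mu.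
Proof.
have step_sum_le : step_sum 0 n <= n%:R * (4 / mu).
  rewrite [n%:R * _]mulr_natl -[X in _ <= _ *+ X](card_ord n) -sumr_const.
  by apply: ler_sum => j _; rewrite add0n stepsize_le.
rewrite [X in _ <= X](_ : _ = lyap_coef 0 * D2 + L0 ^+ 2 * (n%:R * (4 / mu))).
  by rewrite lerD2l ler_wpM2l ?sqr_ge0.
by rewrite lyap_coef0; field; rewrite (gt_eqF mu_gt0).
Qed.

Lemma lyap_coef_descent k L0 dl D2 V : mu / 2 * D2 <= dl ->
  sg_weight mu L1 k * dl
    + lyap_coef k.+1 * (V - 2 * alpha k * dl + alpha k ^+ 2 * (L0 ^+ 2 + L1 * dl))
  <= lyap_coef k * D2 + lyap_coef k.+1 * (V - D2) + L0 ^+ 2 * (k.+1%:R * alpha k).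
Proof.
move=> growth; have := ler_wpM2l (ler0n R k.+1) growth.
have := lyap_coefS_stepsize k; have := lyap_coefS k; rewrite /sg_weight.
set C := lyap_coef k.+1; set c := lyap_coef k; set a := alpha k; set K := k.+1%:R.
move=> rec ca.
have -> : K * (1 - L1 * a) * dl + C * (V - 2 * a * dl + a ^+ 2 * (L0 ^+ 2 + L1 * dl))
    = C * V - 2 * (C * a) * dl + C * a * (a * L0 ^+ 2 + a * L1 * dl)
      + K * (1 - L1 * a) * dl by ring.
rewrite ca rec; lra.
Qed.

End StepSize.

Section StochasticSubgradient.
Variables (R : realType) (d : nat) (f : 'rV[R]_d -> \bar R) (Q : set 'rV[R]_d)
  (fstar mu L0 L1 : R) (dk : measure_display) (Xi : measurableType dk)
  (D : probability Xi R) (g : 'rV[R]_d -> Xi -> 'rV[R]_d) (P : 'rV[R]_d -> 'rV[R]_d).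

Local Notation Xstar := [set z | Q z /\ f z = fstar%:E].
Local Notation gmean x := (\row_(i < d) fine (\int[D]_xi (g x xi 0 i)%:E)%E).
Local Notation alpha := (stepsize mu L1).

Hypothesis f_fin : forall x, Q x -> f x \is a fin_num.
Hypothesis g_meas : forall x, Q x -> forall i : 'I_d,
  measurable_fun setT (fun xi => g x xi 0 i).
Hypothesis g_int : forall x, Q x -> forall i : 'I_d,
  D.-integrable setT (fun xi => (g x xi 0 i)%:E).
Hypothesis g_subgrad : forall x, Q x -> is_subgrad f x (gmean x).
Hypothesis g_moment : forall x, Q x ->
  (\int[D]_xi ((enorm (g x xi)) ^+ 2)%:E
     <= (L0 ^+ 2)%:E + L1%:E * (f x - fstar%:E))%E.

Lemma integrable_dotv_oracle x v : Q x ->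
  D.-integrable setT (fun xi => (dotv v (g x xi))%:E).
Proof.
move=> Qx; rewrite (funext (fun xi => dotv_EFin v (g x xi))).
by apply: integrable_sum => // i _; apply: integrableZl => //; exact: g_int.
Qed.

Lemma integral_dotv_oracle x v : Q x ->
  (\int[D]_xi (dotv v (g x xi))%:E = (dotv v (gmean x))%:E)%E.
Proof.
move=> Qx; rewrite (funext (fun xi => dotv_EFin v (g x xi))) integral_sum //; last first.
  by move=> i; apply: integrableZl => //; exact: g_int.
rewrite dotv_EFin; apply: eq_bigr => i _.
rewrite integralZl //; last exact: g_int.
by rewrite mxE fineK // integrable_fin_num //; exact: g_int.
Qed.

Lemma integrable_sqnorm_oracle x : Q x ->
  D.-integrable setT (fun xi => (dotv (g x xi) (g x xi))%:E).
Proof.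
move=> Qx; apply/integrableP; split.
  apply/measurable_realfun.measurable_EFinP; apply: measurable_sum => i.
  by apply: measurable_realfun.measurable_funM; apply: g_meas.
under eq_integral => xi _ do rewrite gee0_abs ?lee_fin ?dotv_ge0 // -enorm_sqr.
apply: le_lt_trans (g_moment Qx) _.
by rewrite -(fineK (f_fin Qx)) -EFinB -EFinM -EFinD ltry.
Qed.

Lemma integral_sqnorm_oracle_le x : Q x ->
  fine (\int[D]_xi (dotv (g x xi) (g x xi))%:E)%E
    <= L0 ^+ 2 + L1 * (fine (f x) - fstar).
Proof.
move=> Qx; rewrite -lee_fin fineK; last exact/integrable_fin_num/integrable_sqnorm_oracle.
under eq_integral => xi _ do rewrite -enorm_sqr.
by have := g_moment Qx; rewrite -[f x](fineK (f_fin Qx)) -EFinB -EFinM -EFinD.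
Qed.

Lemma gap_le_dotv_gmean x y : Q x -> f y = fstar%:E ->
  fine (f x) - fstar <= dotv (x - y) (gmean x).
Proof.
move=> Qx fy; have := g_subgrad Qx y.
rewrite fy -(fineK (f_fin Qx)) -EFinD lee_fin -opprB dotvNr dotvC; lra.
Qed.

Lemma integral_oracle_step_le x y B c a : Q x -> f y = fstar%:E -> 0 <= c -> 0 <= a ->
  (\int[D]_xi (B + c * dotv (x - a *: g x xi - y) (x - a *: g x xi - y))%:E
   <= (B + c * (dotv (x - y) (x - y) - 2 * a * (fine (f x) - fstar)
         + a ^+ 2 * (L0 ^+ 2 + L1 * (fine (f x) - fstar))))%:E)%E.
Proof.
move=> Qx fy c0 a0; set v := x - y.
have lin := integrable_dotv_oracle v Qx; have sq := integrable_sqnorm_oracle Qx.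
have expand xi : (B + c * dotv (x - a *: g x xi - y) (x - a *: g x xi - y))%:E =
    ((B + c * dotv v v)%:E + ((- 2 * a * c)%:E * (dotv v (g x xi))%:E
       + (c * a ^+ 2)%:E * (dotv (g x xi) (g x xi))%:E))%E.
  by rewrite (addrAC x) dotv_sqrBZ -!EFinM -!EFinD; congr EFin; ring.
under eq_integral => xi _ do rewrite expand.
rewrite integralD //; last 2 first.
- exact: finite_measure_integrable_cst.
- by apply: integrableD => //; apply: integrableZl.
rewrite integral_cst // [X in (_ * X + _)%E]probability_setT mule1.
rewrite integralD //; try exact: integrableZl.
rewrite !integralZl // integral_dotv_oracle //.
rewrite -(fineK (integrable_fin_num _ sq)) // -!EFinM -!EFinD lee_fin.
have gap := gap_le_dotv_gmean Qx fy; have mom := integral_sqnorm_oracle_le Qx.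
have ca0 : 0 <= c * a by rewrite mulr_ge0.
have := ler_wpM2l ca0 gap; have := ler_wpM2l (mulr_ge0 c0 (sqr_ge0 a)) mom.
rewrite -/v; lra.
Qed.

Hypothesis convQ : convex_setv Q.
Hypothesis P_proj : forall x, is_proj Q x (P x).
Hypothesis Xstar0 : Xstar !=set0.
Hypothesis mu_gt0 : 0 < mu.
Hypothesis L1_ge0 : 0 <= L1.
Hypothesis growth : forall x, Q x ->
  ((fstar + mu / 2 * setdist x Xstar ^+ 2)%:E <= f x)%E.

Fixpoint gap_sum (k : nat) (x : 'rV[R]_d) (s : seq Xi) : R :=
  if s is xi :: s' then
    sg_weight mu L1 k * (fine (f x) - fstar) + gap_sum k.+1 (P (x - alpha k *: g x xi)) s'
  else 0.

Lemma sg_run_in_Q k x s : Q x -> Q (sg_run P g mu L1 k x s).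
Proof. by elim: s k x => //= xi s IH k x Qx; apply: IH; exact: (P_proj _).1. Qed.

Lemma gap_sumE s k x : gap_sum k x s =
  \sum_(j < size s) sg_weight mu L1 (k + j) *
     (fine (f (sg_run P g mu L1 k x (take j s))) - fstar).
Proof.
elim: s k x => [|xi s IH] k x /=; first by rewrite big_ord0.
rewrite big_ord_recl addn0 /= IH; congr (_ + _); apply: eq_bigr => j _.
by rewrite /bump leq0n add0n add1n addnS addSn.
Qed.

(* Stated for an affine image of the gap sum: iterE is only known to be monotone,
   not linear, since the iterates need not be measurable. *)
Lemma iterE_gap_sum_le n lam k x A : 0 < lam -> Q x ->
  (iterE D n (fun s => (A + lam * gap_sum k x s)%:E) <=
   (A + lam * (lyap_coef mu L1 k * setdist x Xstar ^+ 2
               + L0 ^+ 2 * step_sum mu L1 k n))%:E)%E.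
Proof.
move=> lam0; elim: n k x A => [|n IH] k x A Qx /=.
  rewrite lee_fin /step_sum big_ord0 !mulr0 !addr0 lerDl pmulr_rge0 //.
  by rewrite mulr_ge0 ?lyap_coef_ge0 ?sqr_ge0.
set dl := fine (f x) - fstar; set C := lyap_coef mu L1 k.+1.
have C0 : 0 < lam * C by rewrite mulr_gt0 ?lyap_coefS_gt0.
(* dist(x, X_star) is only an infimum: use a point of X_star that is close to
   attaining it, up to eps / (lam C). *)
apply/lee_addgt0Pr => eps eps0.
have [y Xy near_y] := setdist_sqr_approx x Xstar0 (divr_gt0 eps0 C0).
set B := A + lam * sg_weight mu L1 k * dl + lam * (L0 ^+ 2 * step_sum mu L1 k.+1 n).
have next xi : (iterE D n (fun s => (A + lam * gap_sum k x (xi :: s))%:E) <=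
    (B + lam * C * dotv (x - alpha k *: g x xi - y) (x - alpha k *: g x xi - y))%:E)%E.
  set z := x - alpha k *: g x xi.
  rewrite [X in iterE _ _ X](_ : _ = fun s =>
      (A + lam * sg_weight mu L1 k * dl + lam * gap_sum k.+1 (P z) s)%:E); last first.
    by apply/funext => s /=; rewrite /dl /z; congr EFin; ring.
  apply: le_trans (IH _ _ _ (P_proj z).1) _; rewrite lee_fin.
  have dist_le : setdist (P z) Xstar ^+ 2 <= dotv (z - y) (z - y).
    exact: setdist_proj_le convQ (fun u (Xu : Xstar u) => Xu.1) (P_proj z) Xy.
  have := ler_wpM2l (ltW C0) dist_le; rewrite -/C /B; lra.
apply: le_trans (le_integral_pointwise _ (fun xi _ => next xi)) _.
apply: le_trans (integral_oracle_step_le B Qx Xy.2 (ltW C0)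
  (ltW (stepsize_gt0 mu_gt0 L1_ge0 k))) _.
rewrite -EFinD lee_fin step_sumS -/dl.
have dl_ge : mu / 2 * setdist x Xstar ^+ 2 <= dl.
  by have := growth Qx; rewrite -(fineK (f_fin Qx)) lee_fin /dl; lra.
have := lyap_coef_descent mu_gt0 L1_ge0 k L0 (dotv (x - y) (x - y)) dl_ge.
move=> /(ler_wpM2l (ltW lam0)).
have : lam * C * (eps / (lam * C)) = eps by rewrite mulrC divfK ?gt_eqF.
move: near_y; rewrite -(ltr_pM2l C0) -/C /B; lra.
Qed.

Hypothesis convf : convex_efun f.

Lemma sg_avg_gap_le x0 T s : Q x0 -> size s = T.+1 ->
  (f (sg_avg P g mu L1 x0 T s) - fstar%:E <=
   ((\sum_(k < T.+1) sg_weight mu L1 k)^-1 * gap_sum 0 x0 s)%:E)%E.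
Proof.
move=> Qx0 sT; set W := \sum_(k < T.+1) sg_weight mu L1 k.
have W0 : 0 < W := sum_ord_gt0 T (sg_weight_gt0 mu_gt0 L1_ge0).
have fz j : f (sg_iter P g mu L1 x0 s j) = (fine (f (sg_iter P g mu L1 x0 s j)))%:E.
  by rewrite fineK //; apply/f_fin/sg_run_in_Q.
apply: le_trans (leeB (convex_efun_jensen convf T (sg_weight_gt0 mu_gt0 L1_ge0) fz)
  (lexx fstar%:E)) _.
rewrite -EFinB lee_fin gap_sumE sT.
under [X in _ <= _ * X]eq_bigr do rewrite add0n mulrBr.
by rewrite sumrB -mulr_suml mulrBr -/W mulrA mulVf ?gt_eqF // mul1r.
Qed.

End StochasticSubgradient.

Theorem theorem4p1 (R : realType) (d : nat) (f : 'rV[R]_d -> \bar R)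
  (Q : set 'rV[R]_d) (fstar mu L0 L1 : R)
  (dk : measure_display) (Xi : measurableType dk) (D : probability Xi R)
  (g : 'rV[R]_d -> Xi -> 'rV[R]_d) (P : 'rV[R]_d -> 'rV[R]_d)
  (x0 : 'rV[R]_d) (T : nat) :
  (* f : R^d -> R u {+oo}, lower semicontinuous, convex *)
  (forall x, f x != -oo%E) ->
  lower_semicontinuous f ->
  convex_efun f ->
  (* Q nonempty closed convex, contained in dom f *)
  Q !=set0 -> closed Q -> convex_setv Q ->
  (forall x, Q x -> (f x < +oo)%E) ->
  (* X* = argmin_Q f nonempty, with minimum value fstar *)
  (exists2 xs, Q xs & f xs = fstar%:E) ->
  (forall y, Q y -> (fstar%:E <= f y)%E) ->
  (* mu-quadratic growth *)
  0 < mu ->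
  (forall x, Q x ->
     ((fstar + mu / 2 * setdist x [set z | Q z /\ f z = fstar%:E] ^+ 2)%:E
        <= f x)%E) ->
  (* P = P_Q, the Euclidean projection onto Q *)
  (forall x, is_proj Q x (P x)) ->
  (* stochastic subgradient oracle: E_xi g(x;xi) exists and lies in df(x) *)
  (forall x, Q x -> forall i : 'I_d,
     measurable_fun setT (fun xi => g x xi 0 i)) ->
  (forall x, Q x -> forall i : 'I_d,
     D.-integrable setT (fun xi => (g x xi 0 i)%:E)) ->
  (forall x, Q x ->
     is_subgrad f x (\row_(i < d) fine (\int[D]_xi (g x xi 0 i)%:E)%E)) ->
  (* second moment bound *)
  0 <= L0 -> 0 <= L1 ->
  (forall x, Q x ->
     (\int[D]_xi ((enorm (g x xi)) ^+ 2)%:E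
        <= (L0 ^+ 2)%:E + L1%:E * (f x - fstar%:E))%E) ->
  Q x0 ->
  (iterE D T.+1 (fun s => f (sg_avg P g mu L1 x0 T s) - fstar%:E)
     <= ((4 * L0 ^+ 2 * (T.+1)%:R
          + L1 ^+ 2 * setdist x0 [set z | Q z /\ f z = fstar%:E] ^+ 2)
         / (mu * \sum_(k < T.+1) sg_weight mu L1 k))%:E)%E.
Proof.
move=> f_noo _ convf _ _ convQ f_lt_oo [xs Qxs fxs] _ mu_gt0 growth P_proj g_meas
  g_int g_subgrad _ L1_ge0 g_moment Qx0.
have f_fin x : Q x -> f x \is a fin_num.
  by move=> Qx; rewrite fin_numE f_noo (lt_eqF (f_lt_oo _ Qx)).
have Xstar0 : [set z | Q z /\ f z = fstar%:E] !=set0 by exists xs.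
set W := \sum_(k < T.+1) sg_weight mu L1 k.
have W0 : 0 < W := sum_ord_gt0 T (sg_weight_gt0 mu_gt0 L1_ge0).
have W'0 : 0 < W^-1 by rewrite invr_gt0.
apply: le_trans (@le_iterE _ _ _ D T.+1 _
  (fun s => (0 + W^-1 * gap_sum f fstar mu L1 g P 0 x0 s)%:E) _) _.
  move=> s sT; rewrite add0r.
  by move: (sg_avg_gap_le fstar g f_fin P_proj mu_gt0 L1_ge0 convf Qx0 sT).
apply: le_trans (iterE_gap_sum_le f_fin g_meas g_int g_subgrad g_moment convQ P_proj
  Xstar0 mu_gt0 L1_ge0 growth T.+1 0 0 W'0 Qx0) _.
rewrite lee_fin add0r [X in _ <= X](_ : _ = W^-1 * ((4 * L0 ^+ 2 * T.+1%:R
    + L1 ^+ 2 * setdist x0 [set z | Q z /\ f z = fstar%:E] ^+ 2) / mu)).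
  by rewrite ler_wpM2l ?invr_ge0 ?(ltW W0) // lyap_coef_step_sum0_le.
by field; rewrite !gt_eqF.
Qed.
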